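(* Let $x>1$ be an irrational real number with continued fraction expansion $x=[a_1,a_2,\ldots]$ (all $a_i\in\mathbb{Z}_{\geq1}$) and convergents $x_n=[a_1,\ldots,a_n]$. Let $m\geq2$ be even, so that $x_{m-1}<x_m$, and put $a=a_1+\cdots+a_m-1$. Then for every rational number $r/s$ with $x_{m-1}<r/s<x_m$, the coefficients of $q^j$ for $0\leq j\leq a-1$ in the Taylor series at $q=0$ of $[r/s]_q$ coincide with the corresponding coefficients of $[x_{m-1}]_q$ and of $[x_m]_q$.
   Context: For an integer $a\geq1$ put $[a]_q=1+q+\cdots+q^{a-1}$ and $[a]_{q^{-1}}=1+q^{-1}+\cdots+q^{-(a-1)}$. Every rational number $r/s>1$ has a unique expansion as a regular continued fraction of even length, $$r/s=[a_1,\ldots,a_{2m}]=a_1+\cfrac{1}{a_2+\cfrac{1}{\ddots+\cfrac{1}{a_{2m}}}},$$ with all $a_i\in\mathbb{Z}_{\geq1}$. Its $q$-deformation is the rational function $$\left[\tfrac{r}{s}\right]_q=[a_1]_q+\cfrac{q^{a_1}}{[a_2]_{q^{-1}}+\cfrac{q^{-a_2}}{[a_3]_q+\cfrac{q^{a_3}}{[a_4]_{q^{-1}}+\cfrac{q^{-a_4}}{\ddots+\cfrac{q^{a_{2m-1}}}{[a_{2m}]_{q^{-1}}}}}}}.$$ One also sets $[1]_q=1$. Each $[r/s]_q$ is a quotient of polynomials with nonnegative integer coefficients, each having constant term $1$, and is identified with its Taylor expansion at $q=0$. Convergents are deformed using their own even-length expansions. *)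

From HB Require Import structures.
From mathcomp Require Import all_boot all_order all_algebra fraction.
Set Implicit Arguments. Unset Strict Implicit. Unset Printing Implicit Defensive.
Import Order.TTheory GRing.Theory Num.Theory.
Local Open Scope ring_scope.

Notation RF := {fraction {poly rat}}.
Definition qv : RF := @FracField.tofrac _ ('X : {poly rat}).

Definition qint (a : nat) : RF := \sum_(i < a) qv ^+ i.
Definition qintinv (a : nat) : RF := \sum_(i < a) qv ^- i.

(* The boolean flag says whether the current term is a "q" (true) or a
   "q^-1" (false) term; alternates along the expansion. *)
Fixpoint qcf (b : bool) (l : seq nat) : RF :=
  match l with
  | [::] => 0
  | [:: x] => if b then qint x else qintinv x
  | x :: l' => if b then qint x + qv ^+ x / qcf (~~ b) l'
               else qintinv x + qv ^- x / qcf (~~ b) l'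
  end.

Fixpoint euclid_cf (fuel n d : nat) : seq nat :=
  match fuel with
  | 0 => [::]
  | f.+1 => if d == 0%N then [::] else (n %/ d)%N :: euclid_cf f d (n %% d)
  end.

Definition cf_of_rat (r : rat) : seq nat :=
  euclid_cf (`|denq r|%N).+1 `|numq r|%N `|denq r|%N.

Definition even_cf (l : seq nat) : seq nat :=
  if odd (size l) then take (size l).-1 l ++ [:: (last 0%N l).-1; 1%N] else l.

(* The q-deformation [r/s]_q, with the convention [1]_q = 1. *)
Definition qrat (r : rat) : RF :=
  if r == 1 then 1 else qcf true (even_cf (cf_of_rat r)).

Fixpoint cf_val (l : seq nat) : rat :=
  match l with
  | [::] => 0
  | [:: x] => x%:R
  | x :: l' => x%:R + (cf_val l')^-1
  end.

Definition conv (a : nat -> nat) (n : nat) : rat := cf_val [seq a i | i <- iota 1 n].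

Fixpoint ps_upto (P Q : {poly rat}) (n : nat) : seq rat :=
  match n with
  | 0 => [:: P`_0 / Q`_0]
  | n'.+1 => let cs := ps_upto P Q n' in
     rcons cs ((P`_n - \sum_(k < n) Q`_k.+1 * cs`_(n' - k)) / Q`_0)
  end.
Definition ps_coef (P Q : {poly rat}) (j : nat) : rat := (ps_upto P Q j)`_j.

(* Taylor coefficient at q = 0 of a rational function f = n/d:
   cancel the power q^v of q dividing d (v = order of vanishing of d at 0)
   and expand the resulting quotient, whose denominator has nonzero
   constant term (for f regular at 0). *)
Definition taylor (f : RF) (j : nat) : rat :=
  let x := repr f in
  let v := find (fun c : rat => c != 0) (\d_x : {poly rat}) in
  ps_coef (drop_poly v \n_x) (drop_poly v \d_x) j.

(* Write x_{m-1} = [p, A] and x_m = [p, A, b] where p = [a_1, ..., a_{m-2}] has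
   even length, A = a_{m-1} and b = a_m.  A rational r between them has a regular
   continued fraction [p, A, L] whose tail L starts with a partial quotient >= b.

   We work in the local ring of Q(q) at q = 0 (fractions P/Q with Q(0) <> 0) and
   with the congruences f = g mod q^k in it; congruent functions have the same
   first k Taylor coefficients (qcong_taylor).  In the q-continued fraction,
   [A, L]_q = [A]_q + q^A * q^(head L - 1) * (regular), so [A, L]_q is congruent to
   both [A]_q and [A, b]_q modulo q^(A + b - 1) (qcf_tail_qcong); and prefixing an
   even block p multiplies the modulus by q^(a_1 + ... + a_{m-2})
   (qcf_prefix_qcong). *)

From HB Require Import structures.
From mathcomp Require Import all_boot all_order all_algebra fraction generic_quotient.
From mathcomp Require Import ring lra.
Import Order.TTheory GRing.Theory Num.Theory.
Local Open Scope ring_scope.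
Set Implicit Arguments. Unset Strict Implicit. Unset Printing Implicit Defensive.

Lemma dvdXnP (R : idomainType) (n : nat) (p : {poly R}) :
  reflect (forall i, (i < n)%N -> p`_i = 0) ('X^n %| p).
Proof.
rewrite /dvdp -Pdiv.IdomainMonic.take_poly_modp.
apply: (iffP eqP) => [Ep i lt_in | Hp].
  by have := congr1 (fun p : {poly R} => p`_i) Ep; rewrite coef_take_poly lt_in coef0.
by apply/polyP => i; rewrite coef_take_poly coef0; case: ifP => // /Hp.
Qed.

(* A polynomial with nonzero constant term is coprime to 'X^n, so it can be
   cancelled in a divisibility by 'X^n. *)
Lemma dvdXn_cancel (R : idomainType) (n : nat) (p u : {poly R}) :
  u`_0 != 0 -> 'X^n %| p * u -> 'X^n %| p.
Proof.
move=> u0; rewrite Gauss_dvdpl //; apply: coprimep_expl.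
by rewrite coprimep_sym coprimepX /root horner_coef0.
Qed.

Lemma poly_coef0_neq0 (R : nzRingType) (p : {poly R}) : p`_0 != 0 -> p != 0.
Proof. by apply: contra => /eqP ->; rewrite coef0. Qed.

(** Power series expansion of a quotient of polynomials P/Q with Q(0) <> 0. *)

Section PowerSeries.
Variables P Q : {poly rat}.
Hypothesis Q0 : Q`_0 != 0.

Lemma size_ps_upto (n : nat) : size (ps_upto P Q n) = n.+1.
Proof. by elim: n => //= n IH; rewrite size_rcons IH. Qed.

Lemma nth_ps_upto (n i : nat) : (i <= n)%N -> (ps_upto P Q n)`_i = ps_coef P Q i.
Proof.
elim: n => [|n IH]; first by rewrite leqn0 => /eqP ->.
rewrite leq_eqVlt => /orP [/eqP -> //|lt_in].
by rewrite /= nth_rcons size_ps_upto lt_in IH.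
Qed.

Lemma ps_coef_rec (n : nat) :
  \sum_(i < n.+1) Q`_i * ps_coef P Q (n - i) = P`_n.
Proof.
case: n => [|n]; first by rewrite big_ord1 /ps_coef /= mulrC divfK.
rewrite big_ord_recl /= subn0.
have -> : ps_coef P Q n.+1 =
    (P`_n.+1 - \sum_(k < n.+1) Q`_k.+1 * ps_coef P Q (n - k)) / Q`_0.
  rewrite /ps_coef /= nth_rcons size_ps_upto ltnn eqxx.
  congr ((_ - _) / _); apply: eq_bigr => k _.
  by rewrite nth_ps_upto // leq_subr.
rewrite mulrC divfK //.
under eq_bigr => k _ do rewrite /bump /= add1n subSS.
by rewrite subrK.
Qed.

Lemma ps_trunc (N : nat) : 'X^N %| Q * \poly_(i < N) ps_coef P Q i - P.
Proof.
apply/dvdXnP => n lt_nN.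
rewrite coefB coefM -(ps_coef_rec n) -sumrB.
apply: big1 => i _; rewrite coef_poly.
by rewrite (leq_ltn_trans (leq_subr _ _) lt_nN) subrr.
Qed.

End PowerSeries.

Lemma ps_coef_agree (P Q P' Q' : {poly rat}) (k : nat) :
  Q`_0 != 0 -> Q'`_0 != 0 -> 'X^k %| P * Q' - P' * Q ->
  forall j, (j < k)%N -> ps_coef P Q j = ps_coef P' Q' j.
Proof.
move=> Q0 Q'0 dvd_k j lt_jk.
set T := \poly_(i < k) ps_coef P Q i; set T' := \poly_(i < k) ps_coef P' Q' i.
have E : (T - T') * (Q * Q') =
    Q' * (Q * T - P) - Q * (Q' * T' - P') + (P * Q' - P' * Q) by ring.
have : 'X^k %| (T - T') * (Q * Q').
  by rewrite E dvdp_add // dvdp_sub // dvdp_mull // ps_trunc.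
move/dvdXn_cancel; rewrite coef0M mulf_neq0 // => /(_ isT) /dvdXnP /(_ j lt_jk).
by rewrite coefB !coef_poly lt_jk => /eqP; rewrite subr_eq0 => /eqP.
Qed.

Local Open Scope quotient_scope.
Notation "x %:F" := (@FracField.tofrac _ x).

Lemma tofrac_coef0_neq0 (Q : {poly rat}) : Q`_0 != 0 -> Q%:F != 0 :> RF.
Proof. by move=> Q0; rewrite tofrac_eq0 poly_coef0_neq0. Qed.

Lemma frac_repr (f : RF) : f = (\n_(repr f))%:F / (\d_(repr f))%:F.
Proof.
have d0 : (\d_(repr f))%:F != 0 :> RF by rewrite tofrac_eq0 denom_ratioP.
suff E : f * (\d_(repr f))%:F = (\n_(repr f))%:F by rewrite -E mulfK.
move: (reprK f) (denom_ratioP (repr f)); set x := repr f => Ef dx.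
rewrite -{1}Ef; unlock FracField.tofrac.
change (FracField.mul (\pi_RF x) (\pi_RF (Ratio \d_x 1)) = \pi_RF (Ratio \n_x 1)).
rewrite -FracField.pi_mul; apply/eqmodP.
rewrite /= FracField.equivfE /FracField.mulf /= !numden_Ratio ?mulf_neq0 ?oner_neq0 //.
by rewrite !mulr1 mulrC.
Qed.

Lemma frac_cross (n d P Q : {poly rat}) : d != 0 -> Q != 0 ->
  n%:F / d%:F = P%:F / Q%:F :> RF -> n * Q = P * d.
Proof.
move=> d0 Q0 E; apply/eqP; rewrite -(tofrac_eq (n * Q)) !tofracM; apply/eqP.
have d0' : d%:F != 0 :> RF by rewrite tofrac_eq0.
have Q0' : Q%:F != 0 :> RF by rewrite tofrac_eq0.
by rewrite -(divfK d0' n%:F) E mulrAC (divfK Q0').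
Qed.

Lemma taylor_frac (f : RF) (P Q : {poly rat}) : Q`_0 != 0 ->
  f = P%:F / Q%:F -> forall j, taylor f j = ps_coef P Q j.
Proof.
move=> Q0 Ef j; rewrite /taylor.
move: (denom_ratioP (repr f)) (frac_repr f).
set n := \n_(repr f); set d := \d_(repr f) => d0 Ef'.
have E : n * Q = P * d.
  by apply: frac_cross => //; [exact: poly_coef0_neq0 | rewrite -Ef' -Ef].
set v := find _ _.
have has_d : has (fun c : rat => c != 0) d.
  apply/hasP; exists (lead_coef d); last by rewrite lead_coef_eq0.
  by rewrite lead_coefE mem_nth // ltn_predL size_poly_gt0.
have dv0 : d`_v != 0 by exact: (nth_find 0 has_d).
have dvd_d : 'X^v %| d by apply/dvdXnP => i /(before_find 0) /negbFE /eqP.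
have dvd_n : 'X^v %| n by apply: (dvdXn_cancel Q0); rewrite E dvdp_mull.
have ed : d = drop_poly v d * 'X^v.
  by rewrite Pdiv.IdomainMonic.drop_poly_divp divpK.
have en : n = drop_poly v n * 'X^v.
  by rewrite Pdiv.IdomainMonic.drop_poly_divp divpK.
have E2 : drop_poly v n * Q = P * drop_poly v d.
  apply: (@mulIf _ ('X^v)); first by rewrite monic_neq0 // monicXn.
  by rewrite mulrAC -en E {1}ed mulrA.
apply: (ps_coef_agree (k := j.+1)) => //; first by rewrite coef_drop_poly add0n.
by rewrite E2 mulrC subrr dvdp0.
Qed.

(** The local ring of Q(q) at q = 0 and congruences modulo powers of q. *)

Definition regular (f : RF) := exists P Q : {poly rat}, Q`_0 != 0 /\ f = P%:F / Q%:F.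

Definition unit0 (f : RF) :=
  exists P Q : {poly rat}, P`_0 != 0 /\ Q`_0 != 0 /\ f = P%:F / Q%:F.

Definition qcong (k : nat) (f g : RF) := exists u, regular u /\ f - g = qv ^+ k * u.

Lemma qv_neq0 : qv != 0.
Proof. by rewrite /qv tofrac_eq0 polyX_eq0. Qed.

Lemma qvXn_neq0 (n : nat) : qv ^+ n != 0.
Proof. by rewrite expf_neq0 // qv_neq0. Qed.

Lemma regular_poly (p : {poly rat}) : regular p%:F.
Proof. by exists p, 1; rewrite coefC eqxx oner_neq0 tofrac1 divr1. Qed.

Lemma regular1 : regular 1.
Proof. by rewrite -tofrac1; apply: regular_poly. Qed.

Lemma regular_qv : regular qv.
Proof. exact: regular_poly. Qed.

Lemma regularD (f g : RF) : regular f -> regular g -> regular (f + g).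
Proof.
move=> [P [Q [Q0 ->]]] [P' [Q' [Q'0 ->]]].
exists (P * Q' + P' * Q), (Q * Q'); split; first by rewrite coef0M mulf_neq0.
have Q0' := tofrac_coef0_neq0 Q0; have Q'0' := tofrac_coef0_neq0 Q'0.
by rewrite (addf_div _ _ Q0' Q'0') tofracD !tofracM.
Qed.

Lemma regularM (f g : RF) : regular f -> regular g -> regular (f * g).
Proof.
move=> [P [Q [Q0 ->]]] [P' [Q' [Q'0 ->]]].
exists (P * P'), (Q * Q'); split; first by rewrite coef0M mulf_neq0.
by rewrite mulf_div !tofracM.
Qed.

Lemma regularN (f : RF) : regular f -> regular (- f).
Proof. by move=> [P [Q [Q0 ->]]]; exists (- P), Q; rewrite tofracN mulNr. Qed.

Lemma regularB (f g : RF) : regular f -> regular g -> regular (f - g).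
Proof. by move=> rf rg; apply/regularD/regularN. Qed.

Lemma regular_qvXn (n : nat) : regular (qv ^+ n).
Proof. by rewrite -tofracXn; apply: regular_poly. Qed.

Lemma unit0_regular (f : RF) : unit0 f -> regular f.
Proof. by move=> [P [Q [_ [Q0 E]]]]; exists P, Q. Qed.

Lemma unit0_neq0 (f : RF) : unit0 f -> f != 0.
Proof.
by move=> [P [Q [P0 [Q0 ->]]]]; rewrite mulf_neq0 ?invr_eq0 ?tofrac_coef0_neq0.
Qed.

Lemma unit0V (f : RF) : unit0 f -> unit0 f^-1.
Proof. by move=> [P [Q [P0 [Q0 ->]]]]; exists Q, P; rewrite invf_div. Qed.

Lemma regularV (f : RF) : unit0 f -> regular f^-1.
Proof. by move/unit0V/unit0_regular. Qed.

Lemma unit0M (f g : RF) : unit0 f -> unit0 g -> unit0 (f * g).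
Proof.
move=> [P [Q [P0 [Q0 ->]]]] [P' [Q' [P'0 [Q'0 ->]]]].
exists (P * P'), (Q * Q'); rewrite !coef0M !mulf_neq0 //.
by rewrite mulf_div !tofracM.
Qed.

(* Field identities used in Q(q); they are proved in an arbitrary field,
   where the field tactic is efficient. *)
Lemma one_add_div (F : fieldType) (x p q : F) : q != 0 ->
  1 + x * (p / q) = (q + x * p) / q.
Proof. by move=> q0; field. Qed.

Lemma cross_mul_sub (F : fieldType) (p q p' q' x u v : F) :
  q != 0 -> q' != 0 -> v != 0 -> p / q - p' / q' = x * (u / v) ->
  (p * q' - p' * q) * v = x * u * (q * q').
Proof.
move=> q0 q'0 v0 E.
have -> : p * q' - p' * q = (p / q - p' / q') * (q * q') by field; apply/andP.
by rewrite E; field.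
Qed.

Lemma unit0_1addqv (g : RF) : regular g -> unit0 (1 + qv * g).
Proof.
move=> [P [Q [Q0 ->]]]; exists (Q + 'X * P), Q; split; last split => //.
  by rewrite coefD coefXM /= addr0.
by rewrite (one_add_div _ _ (tofrac_coef0_neq0 Q0)) tofracD tofracM.
Qed.

Lemma qcong_taylor (k : nat) (f g : RF) : regular f -> regular g -> qcong k f g ->
  forall j, (j < k)%N -> taylor f j = taylor g j.
Proof.
move=> [P [Q [Q0 Ef]]] [P' [Q' [Q'0 Eg]]] [u [[U [V [V0 Eu]]] Efg]] j lt_jk.
rewrite (taylor_frac Q0 Ef) (taylor_frac Q'0 Eg).
apply: (ps_coef_agree Q0 Q'0 _ lt_jk); apply: (dvdXn_cancel V0).
suff -> : (P * Q' - P' * Q) * V = 'X^k * U * (Q * Q') by rewrite -mulrA dvdp_mulr.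
apply/eqP; rewrite -tofrac_eq; apply/eqP.
have Q0' := tofrac_coef0_neq0 Q0; have Q'0' := tofrac_coef0_neq0 Q'0.
have V0' := tofrac_coef0_neq0 V0.
rewrite !tofracM tofracB !tofracM (tofracXn k 'X).
move: Efg; rewrite Ef Eg Eu /qv => Efg.
exact: (@cross_mul_sub RF _ _ _ _ _ _ _ Q0' Q'0' V0' Efg).
Qed.

Lemma qintS (n : nat) : qint n.+1 = 1 + qv * qint n.
Proof.
rewrite /qint big_ord_recl expr0 mulr_sumr; congr (_ + _).
by apply: eq_bigr => i _; rewrite exprS.
Qed.

Lemma qintSr (n : nat) : qint n.+1 = qint n + qv ^+ n.
Proof. by rewrite /qint big_ord_recr. Qed.

Lemma qintinvSr (n : nat) : qintinv n.+1 = qintinv n + qv ^- n.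
Proof. by rewrite /qintinv big_ord_recr. Qed.

Lemma qint1 : qint 1 = 1.
Proof. by rewrite qintS /qint big_ord0 mulr0 addr0. Qed.

Lemma qintinv1 : qintinv 1 = 1.
Proof. by rewrite /qintinv big_ord1 expr0 invr1. Qed.

Lemma qintinvE (n : nat) : qintinv n = qv * qint n / qv ^+ n.
Proof.
suff E : qintinv n * qv ^+ n = qv * qint n by rewrite -E mulfK // qvXn_neq0.
elim: n => [|n IH]; first by rewrite /qintinv /qint !big_ord0 mul0r mulr0.
have E : (qv ^+ n)^-1 * (qv * qv ^+ n) = qv by rewrite mulrCA mulVf ?mulr1 ?qvXn_neq0.
by rewrite qintinvSr exprS mulrDl E mulrCA IH qintS; ring.
Qed.

Lemma regular_qint (n : nat) : regular (qint n).
Proof.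
elim: n => [|n IH]; first by rewrite /qint big_ord0 -tofrac0; apply: regular_poly.
by rewrite qintS; apply/regularD/regularM/IH/regular_qv/regular1.
Qed.

(* [n]_q(0) = 1 for n > 0. *)
Lemma unit0_qint (n : nat) : (0 < n)%N -> unit0 (qint n).
Proof. by case: n => // n _; rewrite qintS; apply/unit0_1addqv/regular_qint. Qed.

Lemma qintinvV (n : nat) : (0 < n)%N -> (qintinv n)^-1 = qv ^+ n.-1 * (qint n)^-1.
Proof.
case: n => // n _; rewrite qintinvE exprS invf_div /=.
by rewrite invfM mulrACA divff ?qv_neq0 ?mul1r.
Qed.

(** q-continued fractions. *)

Definition pos_seq (l : seq nat) : bool := all (fun x => 0 < x)%N l.

Lemma pos_seq_cat (s t : seq nat) : pos_seq (s ++ t) = pos_seq s && pos_seq t.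
Proof. exact: all_cat. Qed.

Lemma qcf_cons (b : bool) (x : nat) (t : seq nat) : t != [::] ->
  qcf b (x :: t) = if b then qint x + qv ^+ x / qcf (~~ b) t
                   else qintinv x + qv ^- x / qcf (~~ b) t.
Proof. by case: t. Qed.

Lemma inv_add_div (F : fieldType) (e z c w : F) : e != 0 -> w != 0 ->
  1 + z * c * w != 0 -> (z * c / e + e^-1 / w)^-1 = e * (w / (1 + z * c * w)).
Proof. by move=> e0 w0 d0; field; rewrite e0 w0 d0. Qed.

Lemma unit0_qcf_den (y : nat) (W : RF) : unit0 W -> unit0 (1 + qv * qint y * W).
Proof.
by move=> UW; rewrite -mulrA; apply/unit0_1addqv/regularM/unit0_regular/UW/regular_qint.
Qed.

Lemma qcf_false_inv (y : nat) (W : RF) : unit0 W ->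
  (qintinv y + qv ^- y / W)^-1 = qv ^+ y * (W / (1 + qv * qint y * W)).
Proof.
move=> UW; rewrite qintinvE.
exact: (@inv_add_div RF _ _ _ _ (qvXn_neq0 y) (unit0_neq0 UW)
          (unit0_neq0 (unit0_qcf_den y UW))).
Qed.

Lemma qcf_valuation (l : seq nat) : l != [::] -> pos_seq l ->
  unit0 (qcf true l) /\
  exists u, regular u /\ (qcf false l)^-1 = qv ^+ (head 0%N l).-1 * u.
Proof.
elim: l => // x t IH _ /andP [x0 pt].
have [-> | t0] := eqVneq t [::].
  split; first exact: unit0_qint.
  by exists (qint x)^-1; split; [apply/regularV/unit0_qint | apply: qintinvV].
have [Ut [u [ru Eu]]] := IH t0 pt.
rewrite !qcf_cons //; case: x x0 => // x _; split.
  have -> : qint x.+1 + qv ^+ x.+1 / qcf false t =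
      1 + qv * (qint x + qv ^+ x * (qcf false t)^-1) by rewrite qintS exprS; ring.
  apply/unit0_1addqv/regularD; first exact: regular_qint.
  by rewrite Eu; apply/regularM/regularM/ru/regular_qvXn/regular_qvXn.
rewrite (qcf_false_inv x.+1 Ut).
exists (qv * (qcf true t / (1 + qv * qint x.+1 * qcf true t))); split.
  apply/regularM/regularM/regularV/unit0_qcf_den/Ut/unit0_regular/Ut/regular_qv.
by rewrite exprS -mulrA mulrCA.
Qed.

Lemma regular_qcf (l : seq nat) : l != [::] -> pos_seq l -> regular (qcf true l).
Proof. by move=> l0 pl; have [/unit0_regular ? _] := qcf_valuation l0 pl. Qed.

Lemma qcf_pair (x y : nat) (s : seq nat) : s != [::] -> pos_seq s ->
  qcf true [:: x, y & s] =
  qint x + qv ^+ x * (qv ^+ y * (qcf true s / (1 + qv * qint y * qcf true s))).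
Proof.
move=> s0 ps; have [Us _] := qcf_valuation s0 ps.
by rewrite qcf_cons // qcf_cons //= -(qcf_false_inv y Us).
Qed.

Lemma sub_div_one_add (F : fieldType) (c w w' : F) :
  1 + c * w != 0 -> 1 + c * w' != 0 ->
  w / (1 + c * w) - w' / (1 + c * w') = (w - w') / ((1 + c * w) * (1 + c * w')).
Proof. by move=> d0 d'0; field; rewrite d0 d'0. Qed.

Lemma qcf_pair_qcong (x y k : nat) (s s' : seq nat) :
  s != [::] -> pos_seq s -> s' != [::] -> pos_seq s' ->
  qcong k (qcf true s) (qcf true s') ->
  qcong (x + (y + k)) (qcf true [:: x, y & s]) (qcf true [:: x, y & s']).
Proof.
move=> s0 ps s'0 ps' [u [ru E]].
rewrite (qcf_pair x y s0 ps) (qcf_pair x y s'0 ps').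
have [Us _] := qcf_valuation s0 ps; have [Us' _] := qcf_valuation s'0 ps'.
set W := qcf true s in E Us *; set W' := qcf true s' in E Us' *.
have UD := unit0_qcf_den y Us; have UD' := unit0_qcf_den y Us'.
set c := qv * qint y in UD UD' *.
exists (u / ((1 + c * W) * (1 + c * W'))); split.
  by apply/regularM/regularV/unit0M.
have e := @sub_div_one_add RF c W W' (unit0_neq0 UD) (unit0_neq0 UD').
have -> : qint x + qv ^+ x * (qv ^+ y * (W / (1 + c * W))) -
    (qint x + qv ^+ x * (qv ^+ y * (W' / (1 + c * W')))) =
    qv ^+ x * (qv ^+ y * (W / (1 + c * W) - W' / (1 + c * W'))) by ring.
by rewrite e E !exprD !mulrA.
Qed.

Lemma qcf_prefix_qcong (p s s' : seq nat) (k : nat) :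
  ~~ odd (size p) -> pos_seq p ->
  s != [::] -> pos_seq s -> s' != [::] -> pos_seq s' ->
  qcong k (qcf true s) (qcf true s') ->
  qcong (sumn p + k) (qcf true (p ++ s)) (qcf true (p ++ s')).
Proof.
move=> ev_p pp s0 ps s'0 ps' E.
have [n size_p] : exists n, size p = n.*2.
  by exists (size p)./2; rewrite -[LHS](odd_double_half (size p)) (negbTE ev_p).
elim: n p size_p pp {ev_p} => [|n IH] [|x [|y p]] //= [size_p] /andP [_ /andP [_ pp]].
have ps2 : pos_seq (p ++ s) by rewrite pos_seq_cat pp.
have ps2' : pos_seq (p ++ s') by rewrite pos_seq_cat pp.
have := qcf_pair_qcong x y _ ps2 _ ps2' (IH p size_p pp).
by rewrite !addnA; apply; case: (p).
Qed.

Lemma qcf_tail_qcong (p : seq nat) (A b : nat) (L : seq nat) :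
  ~~ odd (size p) -> pos_seq p -> (0 < A)%N -> (0 < b)%N ->
  L != [::] -> pos_seq L -> (b <= head 0%N L)%N ->
  qcong (sumn p + (A + b.-1)) (qcf true (p ++ A :: L)) (qcf true (p ++ [:: A; b])) /\
  qcong (sumn p + (A + b.-1)) (qcf true (p ++ A :: L)) (qcf true (p ++ [:: A])).
Proof.
move=> ev_p pp A0 b0 L0 pL le_bL.
have [_ [u [ru Eu]]] := qcf_valuation L0 pL.
have pAL : pos_seq (A :: L) by rewrite /pos_seq /= A0.
set c := (head 0%N L).-1 in Eu.
have le_bc : (b.-1 <= c)%N by rewrite /c -!subn1 leq_sub2r.
have tail_qcong Z : qcong b.-1 (qv ^+ c * u) Z -> qcong (A + b.-1)
    (qcf true (A :: L)) (qint A + qv ^+ A * Z).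
  move=> [w [rw Ew]]; exists w; split => //.
  rewrite qcf_cons // Eu exprD -mulrA -Ew; ring.
have tail_b : qcong (A + b.-1) (qcf true (A :: L)) (qcf true [:: A; b]).
  have -> : qcf true [:: A; b] = qint A + qv ^+ A * (qv ^+ b.-1 * (qint b)^-1).
    by rewrite qcf_cons //= qintinvV.
  apply: tail_qcong.
  exists (qv ^+ (c - b.-1) * u - (qint b)^-1); split.
    by apply/regularB/regularV/unit0_qint/b0/regularM/ru/regular_qvXn.
  by rewrite mulrBr mulrA -exprD subnKC.
have tail_nil : qcong (A + b.-1) (qcf true (A :: L)) (qcf true [:: A]).
  rewrite -[qcf true [:: A]]addr0 -(mulr0 (qv ^+ A)); apply: tail_qcong.
  exists (qv ^+ (c - b.-1) * u); split; first exact/regularM/ru/regular_qvXn.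
  by rewrite subr0 mulrA -exprD subnKC.
by split; apply: qcf_prefix_qcong; rewrite // /pos_seq /= A0 ?b0.
Qed.

(** Identification of [r]_q with the q-continued fraction of any expansion of r. *)

Lemma qcf1 (b : bool) : qcf b [:: 1%N] = 1.
Proof. by case: b; [exact: qint1 | exact: qintinv1]. Qed.

Lemma qcf_split_last (b : bool) (p : seq nat) (y : nat) :
  qcf b (p ++ [:: y; 1%N]) = qcf b (p ++ [:: y.+1]).
Proof.
elim: p b => [|z p IH] b.
  by rewrite !cat0s qcf_cons // qcf1 !divr1; case: b; rewrite /= ?qintSr ?qintinvSr.
by rewrite !cat_cons !qcf_cons ?IH //; case: (p).
Qed.

Lemma qcf_even_cf (L : seq nat) : L != [::] -> pos_seq L ->
  qcf true (even_cf L) = qcf true L.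
Proof.
rewrite /even_cf; case: ifP => // _.
case/lastP: L => // p y _; rewrite /pos_seq all_rcons => /andP [y0 _].
rewrite size_rcons /= -cats1 take_size_cat // last_cat /=.
by case: y y0 => // y _ /=; rewrite qcf_split_last.
Qed.

Lemma cf_val_cons (x : nat) (t : seq nat) : t != [::] ->
  cf_val (x :: t) = x%:R + (cf_val t)^-1.
Proof. by case: t. Qed.

Lemma cf_val_ge1 (L : seq nat) : L != [::] -> pos_seq L -> 1 <= cf_val L.
Proof.
elim: L => // x t IH _ /andP [x0 pt].
have [-> | t0] := eqVneq t [::]; first by rewrite /= ler1n.
have ge1_t := IH t0 pt.
have : 0 <= (cf_val t)^-1 by rewrite invr_ge0 (le_trans _ ge1_t).
by rewrite cf_val_cons // -(ler1n rat) in x0 *; lra.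
Qed.

Lemma cf_val_tail (t : seq nat) : t != [::] -> pos_seq t ->
  [/\ 0 < (cf_val t)^-1, (cf_val t)^-1 <= 1 & ((cf_val t)^-1 = 1 -> t = [:: 1%N])].
Proof.
move=> t0 pt; have ge1_t := cf_val_ge1 t0 pt.
have gt0_t : 0 < cf_val t by apply: lt_le_trans ge1_t.
split; [by rewrite invr_gt0 | by rewrite invf_le1 |].
move=> /(congr1 GRing.inv); rewrite invrK invr1.
case: t t0 pt {ge1_t gt0_t} => // y [|z t] _ /andP [y0 pt].
  by move=> /= /eqP; rewrite pnatr_eq1 => /eqP ->.
rewrite cf_val_cons // => E.
have : 0 < (cf_val (z :: t))^-1.
  by rewrite invr_gt0 (lt_le_trans _ (@cf_val_ge1 (z :: t) isT pt)).
by rewrite -(ler1n rat) in y0; move=> ?; exfalso; lra.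
Qed.

Lemma cf_val_head (L : seq nat) : L != [::] -> pos_seq L ->
  cf_val L <= (head 0%N L)%:R + 1.
Proof.
case: L => // x t _ /andP [_ pt].
have [-> | t0] := eqVneq t [::]; first by rewrite /= lerDl.
by have [_ le1 _] := cf_val_tail t0 pt; rewrite cf_val_cons // lerD2l.
Qed.

Lemma nat_add_frac_inj (x x' : nat) (w w' : rat) :
  0 < w -> w <= 1 -> 0 < w' -> w' <= 1 -> x%:R + w = x'%:R + w' -> x = x'.
Proof.
move=> w0 w1 w'0 w'1 E.
have [lt_xx' | lt_x'x | //] := ltngtP x x'.
  have : (x.+1)%:R <= x'%:R :> rat by rewrite ler_nat.
  by rewrite -(@natr1 rat) => ?; exfalso; lra.
have : (x'.+1)%:R <= x%:R :> rat by rewrite ler_nat.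
by rewrite -(@natr1 rat) => ?; exfalso; lra.
Qed.

Lemma natr_pred_add1 (x : nat) : (0 < x)%N -> x%:R = x.-1%:R + 1 :> rat.
Proof. by case: x => // x _; rewrite -natr1. Qed.

Lemma qcf_cf_val (L L' : seq nat) (b : bool) :
  L != [::] -> pos_seq L -> L' != [::] -> pos_seq L' ->
  cf_val L = cf_val L' -> qcf b L = qcf b L'.
Proof.
elim: L L' b => // x t IH [//|x' t'] b _ /andP [x0 pt] _ /andP [x'0 pt'].
have [-> | t0] := eqVneq t [::]; have [-> | t'0] := eqVneq t' [::].
- by move=> /= /eqP; rewrite eqr_nat => /eqP ->.
- rewrite (cf_val_cons x' t'0) [cf_val _]/= (natr_pred_add1 x0) => E.
  have [w0 w1 w_eq1] := cf_val_tail t'0 pt'.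
  have ex := nat_add_frac_inj ltr01 (lexx 1) w0 w1 E.
  move: E; rewrite ex => /addrI /esym /w_eq1 ->.
  by rewrite -(prednK x0) ex (qcf_split_last b [::] x').
- rewrite (cf_val_cons x t0) [cf_val [:: x']]/= (natr_pred_add1 x'0) => E.
  have [w0 w1 w_eq1] := cf_val_tail t0 pt.
  have ex := nat_add_frac_inj w0 w1 ltr01 (lexx 1) E.
  move: E; rewrite ex => /addrI /w_eq1 ->.
  by rewrite -(prednK x'0) -ex (qcf_split_last b [::] x).
rewrite !cf_val_cons // => E.
have [w0 w1 _] := cf_val_tail t0 pt; have [w0' w1' _] := cf_val_tail t'0 pt'.
have ex := nat_add_frac_inj w0 w1 w0' w1' E.
move: E; rewrite ex => /addrI /invr_inj Et.
by rewrite !qcf_cons // (IH t' (~~ b)).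
Qed.

Lemma euclid_cf_ok (fuel n d : nat) : (0 < d)%N -> (d < fuel)%N ->
  [/\ euclid_cf fuel n d != [::], head 0%N (euclid_cf fuel n d) = (n %/ d)%N,
      pos_seq (behead (euclid_cf fuel n d)) &
      cf_val (euclid_cf fuel n d) = n%:R / d%:R].
Proof.
elim: fuel n d => // f IH n d d0 lt_df.
have d0' : (d == 0%N) = false by case: d d0 {lt_df}.
have d0R : d%:R != 0 :> rat by rewrite pnatr_eq0 d0'.
rewrite /= d0'.
have [m0 | m0] := posnP (n %% d)%N.
  have -> : euclid_cf f d (n %% d)%N = [::] by rewrite m0; case: f {IH lt_df}.
  split => //=.
  by rewrite -{2}(divnK (_ : d %| n)%N) ?natrM ?mulfK // /dvdn m0.
have lt_mf : (n %% d < f)%N by apply: leq_trans (ltn_pmod _ d0) _.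
have [ne hd pt v] := IH d (n %% d)%N m0 lt_mf.
split => //.
  move: ne hd pt; case: (euclid_cf f d (n %% d)%N) => //= h t _ -> ->.
  by rewrite divn_gt0 // ltnW // ltn_pmod.
rewrite cf_val_cons // v invf_div {3}(divn_eq n d) natrD natrM.
have m0R : (n %% d)%N%:R != 0 :> rat by rewrite pnatr_eq0 -lt0n.
by field.
Qed.

Lemma cf_of_rat_ok (r : rat) : 1 <= r ->
  [/\ cf_of_rat r != [::], pos_seq (cf_of_rat r) & cf_val (cf_of_rat r) = r].
Proof.
move=> ge1_r; have gt0_r : 0 < r by apply: lt_le_trans ge1_r.
have en : (`|numq r|%N)%:R = (numq r)%:~R :> rat.
  by rewrite natr_absz gtr0_norm // numq_gt0.
have ed : (`|denq r|%N)%:R = (denq r)%:~R :> rat.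
  by rewrite natr_absz gtr0_norm // denq_gt0.
have d0 : (0 < `|denq r|)%N by rewrite absz_gt0 denq_neq0.
have [ne hd pt v] := euclid_cf_ok `|numq r|%N d0 (ltnSn _).
rewrite /cf_of_rat v en ed divq_num_den; split => //.
move: ne hd pt; case: (euclid_cf _ _ _) => //= h t _ -> pt.
rewrite /pos_seq /= -/(pos_seq t) pt andbT divn_gt0 // -(ler_nat rat) en ed.
rewrite -(ler_pM2r (x := ((denq r)%:~R)^-1)) ?invr_gt0 ?ltr0z ?denq_gt0 //.
by rewrite mulfV ?intr_eq0 ?denq_neq0 // divq_num_den.
Qed.

Lemma cf_val_eq1 (L : seq nat) : L != [::] -> pos_seq L -> cf_val L = 1 -> L = [:: 1%N].
Proof.
case: L => // x t _ /andP [x0 pt].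
have [-> | t0] := eqVneq t [::]; first by move=> /= /eqP; rewrite pnatr_eq1 => /eqP ->.
have [w0 _ _] := cf_val_tail t0 pt.
by rewrite cf_val_cons // -(ler1n rat) in x0 * => ?; exfalso; lra.
Qed.

Lemma qrat_cf (L : seq nat) : L != [::] -> pos_seq L -> qrat (cf_val L) = qcf true L.
Proof.
move=> L0 pL; rewrite /qrat; case: ifP => [/eqP /(cf_val_eq1 L0 pL) -> | _].
  by rewrite qcf1.
have [L'0 pL' vL'] := cf_of_rat_ok (cf_val_ge1 L0 pL).
by rewrite qcf_even_cf //; apply: qcf_cf_val.
Qed.

(** Rationals between the convergents [p, A] and [p, A, b]. *)

Definition cf_prefix (p : seq nat) (t : rat) : rat :=
  foldr (fun x acc => x%:R + acc^-1) t p.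

Lemma cf_val_cat (p L : seq nat) : L != [::] -> cf_val (p ++ L) = cf_prefix p (cf_val L).
Proof.
move=> L0; elim: p => // x p IH.
by rewrite cat_cons cf_val_cons ?IH //; case: (p).
Qed.

Lemma cf_prefix_gt0 (p : seq nat) (t : rat) : 0 < t -> 0 < cf_prefix p t.
Proof.
move=> t0; elim: p => //= x p IH.
have : 0 < (cf_prefix p t)^-1 by rewrite invr_gt0.
have : 0 <= x%:R :> rat by [].
lra.
Qed.

Definition between (u w r : rat) : bool := (u < r < w) || (w < r < u).

Lemma between_cf_prefix (p : seq nat) (u w r : rat) : 0 < u -> 0 < w ->
  between (cf_prefix p u) (cf_prefix p w) r ->
  exists s, between u w s /\ r = cf_prefix p s.
Proof.
move=> u0 w0; elim: p r => [|x p IH] r; first by move=> H; exists r.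
rewrite /= /between => H.
have U0 := cf_prefix_gt0 p u0; have W0 := cf_prefix_gt0 p w0.
set U := cf_prefix p u in H U0 *; set W := cf_prefix p w in H W0 *.
have iU : 0 < U^-1 by rewrite invr_gt0.
have iW : 0 < W^-1 by rewrite invr_gt0.
have r0 : 0 < r - x%:R by case/orP: H => /andP [? ?]; lra.
have H' : between U W (r - x%:R)^-1.
  rewrite /between -[U]invrK -[W]invrK.
  case/orP: H => /andP [? ?]; apply/orP; [right | left]; apply/andP;
    by split; rewrite ltf_pV2 ?posrE ?invr_gt0 //; lra.
have [s [Hs Es]] := IH _ H'.
by exists s; split => //; rewrite -Es invrK; lra.
Qed.

Lemma between_convergents (p : seq nat) (A b : nat) (r : rat) :
  (0 < A)%N -> (0 < b)%N -> between (cf_val (p ++ [:: A])) (cf_val (p ++ [:: A; b])) r ->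
  exists L, [/\ L != [::], pos_seq L, (b <= head 0%N L)%N & r = cf_val (p ++ A :: L)].
Proof.
move=> A0 b0; rewrite !cf_val_cat // [cf_val [:: A; b]]cf_val_cons // => H.
have AR : 0 < A%:R :> rat by rewrite ltr0n.
have bR : 0 < b%:R :> rat by rewrite ltr0n.
have ibR : 0 < (b%:R : rat)^-1 by rewrite invr_gt0.
have [s [Hs ->]] := between_cf_prefix AR (ltr_wpDr (ltW ibR) AR) H.
have [gt_sA lt_sAb] : A%:R < s /\ s < A%:R + (b%:R)^-1.
  by case/orP: Hs => /andP [? ?]; split => //; lra.
set t := (s - A%:R)^-1.
have lt_bt : b%:R < t by rewrite /t -[b%:R]invrK ltf_pV2 ?posrE ?invr_gt0 //; lra.
have ge1_t : 1 <= t by rewrite -(ler1n rat) in b0; lra.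
have [L0 pL vL] := cf_of_rat_ok ge1_t.
exists (cf_of_rat t); split => //.
  have := cf_val_head L0 pL; rewrite vL => le_t.
  by rewrite -ltnS -(ltr_nat rat) -natr1; lra.
by rewrite cf_val_cat // cf_val_cons // vL /t invrK; congr cf_prefix; lra.
Qed.

Lemma qcong_taylor_qrat (k : nat) (L L' : seq nat) :
  L != [::] -> pos_seq L -> L' != [::] -> pos_seq L' ->
  qcong k (qcf true L) (qcf true L') ->
  forall j, (j < k)%N -> taylor (qrat (cf_val L)) j = taylor (qrat (cf_val L')) j.
Proof.
move=> L0 pL L'0 pL' cong; rewrite !qrat_cf //.
by apply: qcong_taylor cong; apply: regular_qcf.
Qed.

Lemma conv_cat (a : nat -> nat) (n k : nat) :
  conv a (n + k) = cf_val ([seq a i | i <- iota 1 n] ++ [seq a i | i <- iota n.+1 k]).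
Proof. by rewrite /conv iotaD map_cat add1n. Qed.

Lemma sum_partial_quotients (a : nat -> nat) (n : nat) :
  (\sum_(1 <= i < n.+1) a i)%N = sumn [seq a i | i <- iota 1 n].
Proof. by rewrite sumnE big_map /index_iota subn1. Qed.

Theorem lemma3p1 (a : nat -> nat) (m : nat) :
  (forall i : nat, (1 <= i)%N -> (0 < a i)%N) ->
  ~~ odd m -> (2 <= m)%N ->
  forall r : rat, conv a m.-1 < r -> r < conv a m ->
  forall j : nat, (j < (\sum_(1 <= i < m.+1) a i).-1)%N ->
    taylor (qrat r) j = taylor (qrat (conv a m.-1)) j /\
    taylor (qrat r) j = taylor (qrat (conv a m)) j.
Proof.
move=> a_pos + + r; case: m => [|[|n]] // ev_n _ gt_r lt_r j lt_j.
set p := [seq a i | i <- iota 1 n]; set A := a n.+1; set b := a n.+2.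
have A0 : (0 < A)%N by apply: a_pos.
have b0 : (0 < b)%N by apply: a_pos.
have pp : pos_seq p.
  by apply/allP => x /mapP [i]; rewrite mem_iota => /andP [/a_pos ? _] ->.
have ev_p : ~~ odd (size p) by rewrite size_map size_iota; rewrite /= negbK in ev_n.
have conv_A : conv a n.+1 = cf_val (p ++ [:: A]) by rewrite -addn1 conv_cat.
have conv_b : conv a n.+2 = cf_val (p ++ [:: A; b]) by rewrite -addn2 conv_cat.
have [L [L0 pL le_bL ->]] : exists L, [/\ L != [::], pos_seq L, (b <= head 0%N L)%N &
    r = cf_val (p ++ A :: L)].
  by apply: between_convergents => //; rewrite -conv_A -conv_b /between gt_r lt_r.
have lt_jk : (j < sumn p + (A + b.-1))%N.
  rewrite sum_partial_quotients -addn2 iotaD map_cat sumn_cat in lt_j.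
  by rewrite /= addn0 -/p -/A -/b -(prednK b0) !addnS in lt_j.
have [cong_b cong_A] := qcf_tail_qcong ev_p pp A0 b0 L0 pL le_bL.
rewrite conv_A conv_b.
by split; [apply: (qcong_taylor_qrat _ _ _ _ cong_A lt_jk)
  | apply: (qcong_taylor_qrat _ _ _ _ cong_b lt_jk)];
  rewrite ?pos_seq_cat ?pp //= ?A0 ?b0 //; case: (p).
Qed.
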